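(* Fix a total order on the subsets of $\mathbb N_n$, for instance the lexicographic order, and write $I<J$ accordingly. The family $$\mathfrak B^{\mathbb R}=\{2^{-n/2}b_K: K\subseteq\mathbb N_n\}\ \cup\ \Big\{\tfrac{b_K(\mathbf c_{I,J}+\mathbf c_{J,I})}{2^{(n+1-|I\cup J|)/2}},\ \tfrac{-i\,b_K(\mathbf c_{I,J}-\mathbf c_{J,I})}{2^{(n+1-|I\cup J|)/2}}:\ K,I,J\subseteq\mathbb N_n \text{ mutually disjoint},\ I<J\Big\}$$ consists of self-adjoint operators and is an orthonormal $\mathbb C$-basis of $\mathcal L^2(\mathcal F)$. Moreover, for every $k\in\mathbb N_0$, the set $\mathfrak B^{\mathbb R}\cap\mathcal O_k^{\mathrm{sa}}$ is an orthonormal $\mathbb R$-basis of $\mathcal O_k^{\mathrm{sa}}$. Explicitly, it consists of two kinds of elements: - the elements $2^{-n/2}b_K$ with $|K|\le k$; - the elements of the second set above with $|I|+|J|+2|K|=2l$ for some $0\le l\le k$.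
   Context: Let $\mathfrak h$ be a complex Hilbert space of dimension $n<\infty$ with orthonormal basis $\varphi_1,\dots,\varphi_n$, and $\mathbb N_n=\{1,\dots,n\}$. $\mathcal F=\bigoplus_k\bigwedge^k\mathfrak h$ is the fermion Fock space. For $\omega\in\mathcal F$, $\mathbf c^*(\omega)\xi=\omega\wedge\xi$ and $\mathbf c(\omega)=\mathbf c^*(\omega)^*$. For $A=\{a_1<\dots<a_k\}$, $\varphi_A=\varphi_{a_1}\wedge\cdots\wedge\varphi_{a_k}$ (with $\varphi_\emptyset$ the vacuum). Put $\mathbf c^*_A=\mathbf c^*(\varphi_A)$, $\mathbf c_A=\mathbf c(\varphi_A)$, $\mathbf c_{A,B}=\mathbf c^*_A\mathbf c_B$, and $\mathbf n_A=\mathbf c_{A,A}$. For $K\subseteq\mathbb N_n$ let $b_K=\sum_{I\subseteq K}(-2)^{|I|}\mathbf n_I$. $\mathcal L^2(\mathcal F)$ is the space of operators on $\mathcal F$ with $\langle a,b\rangle=\operatorname{tr}(a^*b)$. $\mathcal O_k$, the space of $k$-body operators, is the complex span of all $\mathbf c^*(\omega)\mathbf c(\eta)$ with $\omega\in\bigwedge^r\mathfrak h$, $\eta\in\bigwedge^s\mathfrak h$, and $r+s=2l$ for some $0\le l\le k$. $\mathcal O_k^{\mathrm{sa}}$ is the real subspace of self-adjoint elements of $\mathcal O_k$. *)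

From HB Require Import structures.
From mathcomp Require Import all_boot all_order all_algebra.
From mathcomp Require Import algC.
Set Implicit Arguments. Unset Strict Implicit. Unset Printing Implicit Defensive.
Import Order.TTheory GRing.Theory Num.Theory.
Local Open Scope ring_scope.

(* Fock space F = (+)_k /\^k h, dim h = n, with orthonormal basis phi_A,
   A ranging over subsets of N_n (here 'I_n). *)
Definition dimF (n : nat) : nat := #|{: {set 'I_n}}|.
Definition setOf (n : nat) (i : 'I_(dimF n)) : {set 'I_n} := enum_val i.
Definition rankOf (n : nat) (A : {set 'I_n}) : 'I_(dimF n) := enum_rank A.

Definition fock (n : nat) := 'cV[algC]_(dimF n).
Definition op (n : nat) := 'M[algC]_(dimF n).

Definition phi (n : nat) (A : {set 'I_n}) : fock n :=
  \col_i (if setOf i == A then 1 else 0).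

(* phi_A /\ phi_B = wsign A B * phi_(A u B) when A, B disjoint (else 0):
   sorting requires one transposition per pair (a,b) in A x B with b < a. *)
Definition wsign (n : nat) (A B : {set 'I_n}) : algC :=
  (-1) ^+ #|[set p : 'I_n * 'I_n | [&& p.1 \in A, p.2 \in B & (p.2 < p.1)%N]]|.

(* c^*(omega) xi = omega /\ xi, as a matrix in the basis (phi_A) *)
Definition cstar (n : nat) (om : fock n) : op n :=
  \matrix_(x, y) \sum_(A : {set 'I_n})
     om (rankOf A) 0 *
       (if [disjoint A & setOf y] && (setOf x == A :|: setOf y)
        then wsign A (setOf y) else 0).

Definition adj (n : nat) (a : op n) : op n := (map_mx Num.conj a)^T.

Definition cann (n : nat) (om : fock n) : op n := adj (cstar om).

Definition cstarS (n : nat) (A : {set 'I_n}) : op n := cstar (phi A).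
Definition cannS (n : nat) (A : {set 'I_n}) : op n := cann (phi A).
Definition cAB (n : nat) (A B : {set 'I_n}) : op n := cstarS A *m cannS B.
Definition nS (n : nat) (A : {set 'I_n}) : op n := cAB A A.

Definition bK (n : nat) (K : {set 'I_n}) : op n :=
  \sum_(P : {set 'I_n} | P \subset K) ((-2) ^+ #|P|) *: nS P.

Definition hs (n : nat) (a b : op n) : algC := \tr (adj a *m b).

(* omega in /\^r h *)
Definition homog (n : nat) (r : nat) (om : fock n) : Prop :=
  forall A : {set 'I_n}, #|A| != r -> om (rankOf A) 0 = 0.

Definition Ok (n k : nat) (X : op n) : Prop :=
  exists (m : nat) (coef : 'I_m -> algC) (r s : 'I_m -> nat) (om et : 'I_m -> fock n),
    (forall i, [/\ homog (r i) (om i), homog (s i) (et i) &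
                   exists l, (l <= k)%N /\ (r i + s i)%N = (2 * l)%N]) /\
    X = \sum_(i < m) coef i *: (cstar (om i) *m cann (et i)).

Definition Oksa (n k : nat) (X : op n) : Prop := Ok k X /\ adj X = X.

(* Index set of the family B^R: inl K  ~  2^{-n/2} b_K ;
   inr (K, I, J, true)  ~  b_K (c_IJ + c_JI) / 2^{(n+1-|IuJ|)/2},
   inr (K, I, J, false) ~  -i b_K (c_IJ - c_JI) / 2^{(n+1-|IuJ|)/2}. *)
Definition bidx (n : nat) : finType :=
  ({set 'I_n} + {set 'I_n} * {set 'I_n} * {set 'I_n} * bool)%type.

Definition bvalid (n : nat) (lt : rel {set 'I_n}) (x : bidx n) : bool :=
  match x with
  | inl K => true
  | inr (K, P, Q, _) =>
      [&& [disjoint K & P], [disjoint K & Q], [disjoint P & Q] & lt P Q]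
  end.

Definition bfam (n : nat) (x : bidx n) : op n :=
  match x with
  | inl K => (sqrtC 2 ^- n) *: bK K
  | inr (K, P, Q, b) =>
      (sqrtC 2 ^- (n + 1 - #|P :|: Q|)%N) *:
        (if b then bK K *m (cAB P Q + cAB Q P)
         else (- 'i) *: (bK K *m (cAB P Q - cAB Q P)))
  end.

Definition bcond (n : nat) (k : nat) (x : bidx n) : bool :=
  match x with
  | inl K => (#|K| <= k)%N
  | inr (K, P, Q, _) => [exists l : 'I_k.+1, (#|P| + #|Q| + 2 * #|K|)%N == (2 * l)%N]
  end.

(** Write [bcAB K P Q] for [b_K c_(P,Q)], with [K], [P], [Q] pairwise disjoint.
    In the basis [phi_X], [c_(P,Q)] maps [phi_(Q :|: Z)] to [+- phi_(P :|: Z)] for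
    every [Z] disjoint from [P :|: Q], and [b_K] is diagonal with entries
    [(-1)^|K :&: X|].  Hence [bcAB K P Q] and [bcAB K' P' Q'] can only overlap when
    [(P, Q) = (P', Q')], and then their Hilbert-Schmidt product is a character sum
    over the subsets of the complement of [P :|: Q]: it vanishes unless [K = K'] and
    is [2^(n - |P :|: Q|)] otherwise.  So these operators are orthogonal, the adjoint
    of [bcAB K P Q] is [bcAB K Q P], and the elements of B^R are the normalised
    combinations [bcAB K P Q + bcAB K Q P] and [-i (bcAB K P Q - bcAB K Q P)]; this
    gives self-adjointness and orthonormality.  Inverting the character sums
    (Walsh-Hadamard inversion) writes every matrix unit, hence every operator, as a
    combination of the [bcAB K P Q].

    For the k-body part, [b_K] expands into the number operators [n_T] ([T] in [K])
    and [n_T c_(P,Q)] is [+- c_(T :|: P, T :|: Q)], so [bcAB K P Q] is a k-body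
    operator whenever [|P| + |Q| + 2|K|] is even and at most [2k].  Conversely
    [c_(A,B)] expands into [bcAB K (A :\: B) (B :\: A)] with [K] in [A :&: B], all of
    degree at most [|A| + |B|], so an element of B^R of any other degree is
    orthogonal to O_k; since B^R is orthonormal, the coefficients of a self-adjoint
    [X] in O_k are the real numbers [<b, X>] and vanish outside the described
    subfamily. *)

From HB Require Import structures.
From mathcomp Require Import all_boot all_order all_algebra.
From mathcomp Require Import algC.
From mathcomp Require Import ring zify.
Import Order.TTheory GRing.Theory Num.Theory.
Local Open Scope ring_scope.
Set Implicit Arguments. Unset Strict Implicit. Unset Printing Implicit Defensive.

Section Pointwise.
Variable T : finType.
Implicit Types A B : {set T}.

Lemma eqEforall A B : (A == B) = [forall i, (i \in A) == (i \in B)].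
Proof. by apply/eqP/forallP => [-> i // | AB]; apply/setP => i; apply/eqP/AB. Qed.

Lemma disjointEforall A B : [disjoint A & B] = [forall i, ~~ ((i \in A) && (i \in B))].
Proof.
rewrite -setI_eq0 eqEforall; apply: eq_forallb => i.
by rewrite !inE; case: (_ && _).
Qed.

Lemma subsetEforall A B : (A \subset B) = [forall i, (i \in A) ==> (i \in B)].
Proof. by apply/subsetP/forallP => AB i; [apply/implyP/AB | apply/implyP/AB]. Qed.

Lemma andb_forall (p q : pred T) :
  [forall i, p i] && [forall i, q i] = [forall i, p i && q i].
Proof.
apply/andP/forallP => [[/forallP P /forallP Q] i | PQ]; first by rewrite P Q.
by split; apply/forallP => i; case/andP: (PQ i).
Qed.

Lemma forall_imply (p q : pred T) :
  (forall i, p i -> q i) -> [forall i, p i] -> [forall i, q i].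
Proof. by move=> pq /forallP P; apply/forallP => i; apply/pq/P. Qed.

Lemma disjoint_at A B : [disjoint A & B] -> forall i, ~~ ((i \in A) && (i \in B)).
Proof. by rewrite disjointEforall => /forallP. Qed.

Lemma cards_disjU A B : [disjoint A & B] -> #|A :|: B| = (#|A| + #|B|)%N.
Proof. by move=> d; apply/eqP; rewrite (leq_card_setU A B). Qed.

End Pointwise.

(* [set_eq] and [set_bool] decide identities between set expressions, resp. Boolean
   combinations of [==], [\subset] and [disjoint] of them, by case analysis on the
   memberships of a generic point; disjointness hypotheses in the context are used. *)
Ltac case_memberships :=
  repeat match goal with
  | |- context [?x \in ?A] => case: (x \in A)
  | |- context [?x == ?y] => is_var x; case: (x == y)
  | |- context [(?a < ?b)%N] => case: (a < b)%N
  end; done.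

Ltac push_disjoint i :=
  repeat match goal with
  H : is_true (disjoint _ _) |- _ => move: (disjoint_at H i); clear H
  end.

Ltac set_eq :=
  let i := fresh "i" in apply/setP => i; push_disjoint i; rewrite ?inE; case_memberships.

Ltac set_bool :=
  let i := fresh "i" in
  rewrite ?eqEforall ?disjointEforall ?subsetEforall ?andb_forall;
  first [apply: eq_forallb => i | apply/forallP => i | apply: forall_imply => i];
  push_disjoint i; rewrite ?inE; case_memberships.

Section SubsetSums.
Variables (R : comNzRingType) (T : finType).
Implicit Types (C L : {set T}).

Lemma sum_subset_prod C (F : T -> R) :
  \sum_(Z : {set T} | Z \subset C) \prod_(i in Z) F i = \prod_(i in C) (1 + F i).
Proof.
have -> : \prod_(i in C) (1 + F i) = \prod_i ((if i \in C then F i else 0) + 1).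
  by rewrite big_mkcond; apply: eq_bigr => i _; case: (i \in C); rewrite ?add0r // addrC.
rewrite bigA_distr [RHS](bigID (fun Z : {set T} => Z \subset C)) /=.
rewrite [X in _ = _ + X]big1 ?addr0.
  apply: eq_big => // Z ZC; rewrite [LHS]big_mkcond; apply: eq_bigr => i _.
  by case: ifP => // /(subsetP ZC) ->.
by move=> Z /subsetPn [i iZ iC]; rewrite (bigD1 i) //= iZ (negbTE iC) mul0r.
Qed.

Lemma sign_cardI L Z :
  (-1) ^+ #|L :&: Z| = \prod_(i in Z) (if i \in L then -1 else 1) :> R.
Proof.
rewrite -big_mkcondr prodr_const; congr (_ ^+ _).
by apply: eq_card => i; rewrite !inE andbC.
Qed.

Lemma sign_cardI_symdiff K L Z :
  (-1) ^+ #|K :&: Z| * (-1) ^+ #|L :&: Z| = (-1) ^+ #|(K :\: L :|: L :\: K) :&: Z| :> R.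
Proof.
rewrite !sign_cardI -big_split; apply: eq_bigr => i _; rewrite !inE.
by case: (i \in K); case: (i \in L); rewrite /= ?mulrNN ?mulr1 ?mul1r.
Qed.

Lemma sum_subset_sign L C :
  \sum_(Z : {set T} | Z \subset C) (-1) ^+ #|L :&: Z| =
  if [disjoint L & C] then 2%:R ^+ #|C| else 0 :> R.
Proof.
under eq_bigr do rewrite sign_cardI.
rewrite sum_subset_prod; case: ifP => [LC | /negbT].
  rewrite -prodr_const; apply: eq_bigr => i iC.
  by rewrite (disjointFl LC iC).
rewrite -setI_eq0 => /set0Pn [i]; rewrite inE => /andP [iL iC].
by rewrite (bigD1 i) //= iL subrr mul0r.
Qed.

Lemma sum_subset_pow C (x : R) :
  \sum_(Z : {set T} | Z \subset C) x ^+ #|Z| = (1 + x) ^+ #|C|.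
Proof.
rewrite -prodr_const -sum_subset_prod.
by apply: eq_bigr => Z _; rewrite prodr_const.
Qed.

End SubsetSums.

Section Fock.
Variable n : nat.
Implicit Types (A B K P Q T X Y Z : {set 'I_n}) (M N : op n).

Lemma setOfK : cancel (@setOf n) (@rankOf n). Proof. exact: enum_valK. Qed.
Lemma rankOfK : cancel (@rankOf n) (@setOf n). Proof. exact: enum_rankK. Qed.

Definition ent M X Y : algC := M (rankOf X) (rankOf Y).

Lemma entP M N : (forall X Y, ent M X Y = ent N X Y) -> M = N.
Proof.
move=> MN; apply/matrixP => i j.
by have := MN (setOf i) (setOf j); rewrite /ent !setOfK.
Qed.

Lemma sum_rankOf (F : 'I_(dimF n) -> algC) : \sum_i F i = \sum_X F (rankOf X).
Proof.
by rewrite (reindex (@rankOf n)) //; exists (@setOf n) => x _;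
  [apply: rankOfK | apply: setOfK].
Qed.

Lemma ent_mul M N X Y : ent (M *m N) X Y = \sum_Z ent M X Z * ent N Z Y.
Proof. by rewrite /ent mxE sum_rankOf. Qed.

Lemma entD M N X Y : ent (M + N) X Y = ent M X Y + ent N X Y.
Proof. by rewrite /ent mxE. Qed.

Lemma entN M X Y : ent (- M) X Y = - ent M X Y.
Proof. by rewrite /ent mxE. Qed.

Lemma entZ c M X Y : ent (c *: M) X Y = c * ent M X Y.
Proof. by rewrite /ent mxE. Qed.

Lemma ent_sum (I : finType) (P : pred I) (F : I -> op n) X Y :
  ent (\sum_(i | P i) F i) X Y = \sum_(i | P i) ent (F i) X Y.
Proof. by rewrite /ent summxE. Qed.

Lemma ent_adj M X Y : ent (adj M) X Y = (ent M Y X)^*.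
Proof. by rewrite /ent /adj !mxE. Qed.

Lemma adjD M N : adj (M + N) = adj M + adj N.
Proof. by rewrite /adj map_mxD linearD. Qed.

Lemma adjZ c M : adj (c *: M) = c^* *: adj M.
Proof. by rewrite /adj map_mxZ linearZ. Qed.

Lemma adj_sum (I : finType) (F : I -> op n) : adj (\sum_i F i) = \sum_i adj (F i).
Proof. by apply: big_morph; [exact: adjD | rewrite /adj map_mx0 trmx0]. Qed.

Lemma hs_ent M N : hs M N = \sum_X \sum_Y (ent M X Y)^* * ent N X Y.
Proof.
rewrite /hs /mxtrace sum_rankOf exchange_big /=.
apply: eq_bigr => X _; rewrite mxE sum_rankOf; apply: eq_bigr => Y _.
by rewrite /adj !mxE.
Qed.

Lemma hsDr M N N' : hs M (N + N') = hs M N + hs M N'.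
Proof. by rewrite /hs mulmxDr mxtraceD. Qed.

Lemma hsZr c M N : hs M (c *: N) = c * hs M N.
Proof. by rewrite /hs -scalemxAr mxtraceZ. Qed.

Lemma hs_sumr (I : finType) (P : pred I) (F : I -> op n) M :
  hs M (\sum_(i | P i) F i) = \sum_(i | P i) hs M (F i).
Proof. by rewrite /hs mulmx_sumr raddf_sum. Qed.

Lemma hs_conj M N : (hs M N)^* = hs N M.
Proof.
rewrite !hs_ent rmorph_sum; apply: eq_bigr => X _.
rewrite rmorph_sum; apply: eq_bigr => Y _.
by rewrite rmorphM /= conjCK mulrC.
Qed.

Lemma hsZl c M N : hs (c *: M) N = c^* * hs M N.
Proof. by rewrite -hs_conj hsZr rmorphM /= hs_conj. Qed.

Lemma hsDl M M' N : hs (M + M') N = hs M N + hs M' N.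
Proof. by rewrite -hs_conj hsDr rmorphD /= !hs_conj. Qed.

Lemma hs_real M N : adj M = M -> adj N = N -> hs M N \is Num.real.
Proof.
by move=> saM saN; rewrite CrealE hs_conj /hs saM saN mxtrace_mulC.
Qed.

Lemma wsign_conj A B : (wsign A B)^* = wsign A B.
Proof. exact: rmorph_sign. Qed.

Lemma wsignK A B : wsign A B * wsign A B = 1.
Proof. by rewrite -expr2 sqrr_sign. Qed.

Lemma wsignUl A A' B : [disjoint A & A'] -> wsign (A :|: A') B = wsign A B * wsign A' B.
Proof.
move=> d; rewrite /wsign -exprD -cards_disjU; last first.
  by rewrite disjointEforall; apply/forallP => p; rewrite !inE; move: (disjoint_at d p.1);
    case_memberships.
by congr (_ ^+ _); apply: eq_card => p; rewrite !inE; case_memberships.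
Qed.

Lemma wsignUr A B B' : [disjoint B & B'] -> wsign A (B :|: B') = wsign A B * wsign A B'.
Proof.
move=> d; rewrite /wsign -exprD -cards_disjU; last first.
  by rewrite disjointEforall; apply/forallP => p; rewrite !inE; move: (disjoint_at d p.2);
    case_memberships.
by congr (_ ^+ _); apply: eq_card => p; rewrite !inE; case_memberships.
Qed.

Lemma phiE A B : phi A (rankOf B) 0 = (B == A)%:R.
Proof. by rewrite /phi mxE rankOfK; case: eqP. Qed.

Lemma ent_cstarS A X Y :
  ent (cstarS A) X Y = if [disjoint A & Y] && (X == A :|: Y) then wsign A Y else 0.
Proof.
rewrite /ent /cstarS /cstar mxE (bigD1 A) //= big1 ?addr0.
  by rewrite phiE eqxx mul1r !rankOfK.
by move=> B nBA; rewrite phiE (negbTE nBA) mul0r.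
Qed.

Lemma ent_cannS B X Y :
  ent (cannS B) X Y = if [disjoint B & X] && (Y == B :|: X) then wsign B X else 0.
Proof.
rewrite /cannS /cann ent_adj -/(cstarS B) ent_cstarS.
by case: ifP; rewrite ?wsign_conj ?rmorph0.
Qed.

(** * Transfer operators *)

Definition transfer P Q (c : {set 'I_n} -> algC) : op n :=
  \matrix_(x, y) \sum_(Z : {set 'I_n})
    (if [&& [disjoint P & Z], [disjoint Q & Z], setOf x == P :|: Z & setOf y == Q :|: Z]
     then c Z else 0).

Lemma ent_transfer_sum P Q c X Y :
  ent (transfer P Q c) X Y = \sum_(Z : {set 'I_n})
    (if [&& [disjoint P & Z], [disjoint Q & Z], X == P :|: Z & Y == Q :|: Z]
     then c Z else 0).
Proof. by rewrite /ent mxE !rankOfK. Qed.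

Lemma ent_transfer P Q c X Y :
  ent (transfer P Q c) X Y =
  if [&& P \subset X, [disjoint Q & X :\: P] & Y == Q :|: (X :\: P)]
  then c (X :\: P) else 0.
Proof.
rewrite ent_transfer_sum (bigD1 (X :\: P)) //= big1 => [|Z neZ].
  have -> : [&& [disjoint P & X :\: P], [disjoint Q & X :\: P], X == P :|: X :\: P
     & Y == Q :|: X :\: P] = [&& P \subset X, [disjoint Q & X :\: P]
     & Y == Q :|: X :\: P].
    by set_bool.
  by rewrite addr0.
case: ifP => // /and4P [dPZ _ /eqP eX _]; case/negP: neZ; subst X.
by apply/eqP; set_eq.
Qed.

Lemma ent_transfer_at P Q P' Q' c Z :
  [disjoint P & Q] -> [disjoint P' & Q'] -> [disjoint P & Z] -> [disjoint Q & Z] ->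
  ent (transfer P' Q' c) (P :|: Z) (Q :|: Z) =
  if (P == P') && (Q == Q') then c Z else 0.
Proof.
move=> dPQ dPQ' dPZ dQZ; rewrite ent_transfer.
case E: ((P == P') && (Q == Q')).
  case/andP: E => /eqP <- /eqP <-.
  have -> : (P :|: Z) :\: P = Z by set_eq.
  by rewrite subsetUl dQZ eqxx.
rewrite ifF //; apply: contraFF E.
by set_bool.
Qed.

Lemma eq_transfer P Q c c' :
  (forall Z, [disjoint P & Z] -> [disjoint Q & Z] -> c Z = c' Z) ->
  transfer P Q c = transfer P Q c'.
Proof.
move=> ceq; apply/matrixP => x y; rewrite !mxE; apply: eq_bigr => Z _.
by case: ifP => // /and4P [dPZ dQZ _ _]; rewrite ceq.
Qed.

Lemma scale_transfer a P Q c : a *: transfer P Q c = transfer P Q (fun Z => a * c Z).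
Proof.
apply/matrixP => x y; rewrite !mxE mulr_sumr; apply: eq_bigr => Z _.
by case: ifP; rewrite ?mulr0.
Qed.

Lemma sum_transfer (I : finType) (r : pred I) P Q (c : I -> {set 'I_n} -> algC) :
  \sum_(i | r i) transfer P Q (c i) = transfer P Q (fun Z => \sum_(i | r i) c i Z).
Proof.
apply/matrixP => x y; rewrite summxE !mxE; under eq_bigr do rewrite mxE.
rewrite exchange_big; apply: eq_bigr => Z _.
by case: ifP => _ //; rewrite big1.
Qed.

Lemma adj_transfer P Q c : adj (transfer P Q c) = transfer Q P (fun Z => (c Z)^*).
Proof.
apply: entP => X Y; rewrite ent_adj !ent_transfer_sum rmorph_sum; apply: eq_bigr => Z _.
by case: [disjoint P & Z]; case: [disjoint Q & Z]; case: (Y == _); case: (X == _);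
  rewrite /= ?rmorph0.
Qed.

Lemma hs_transferl P Q c N :
  hs (transfer P Q c) N =
  \sum_(Z : {set 'I_n} | [disjoint P & Z] && [disjoint Q & Z])
    (c Z)^* * ent N (P :|: Z) (Q :|: Z).
Proof.
rewrite hs_ent.
under eq_bigr do under eq_bigr do rewrite ent_transfer_sum rmorph_sum mulr_suml.
under eq_bigr do rewrite exchange_big /=.
rewrite exchange_big /= [RHS]big_mkcond; apply: eq_bigr => Z _.
rewrite (bigD1 (P :|: Z)) //= [X in _ + X]big1 => [|X nX]; last first.
  by rewrite big1 // => Y _; rewrite (negbTE nX) /= !andbF conjC0 mul0r.
rewrite (bigD1 (Q :|: Z)) //= big1 => [|Y nY]; last first.
  by rewrite (negbTE nY) !andbF conjC0 mul0r.
by rewrite !eqxx !andbT !addr0; case: ifP; rewrite ?conjC0 ?mul0r.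
Qed.

Lemma hs_transfer P Q P' Q' c c' : [disjoint P & Q] -> [disjoint P' & Q'] ->
  hs (transfer P Q c) (transfer P' Q' c') =
  if (P == P') && (Q == Q') then
    \sum_(Z : {set 'I_n} | [disjoint P & Z] && [disjoint Q & Z]) (c Z)^* * c' Z
  else 0.
Proof.
move=> dPQ dPQ'; rewrite hs_transferl; case: ifP => PQ.
  by apply: eq_bigr => Z /andP [dPZ dQZ]; rewrite ent_transfer_at // PQ.
by rewrite big1 // => Z /andP [dPZ dQZ]; rewrite ent_transfer_at // PQ mulr0.
Qed.

Lemma delta_transfer X0 Y0 :
  delta_mx (rankOf X0) (rankOf Y0) =
  transfer (X0 :\: Y0) (Y0 :\: X0) (fun Z => (Z == X0 :&: Y0)%:R).
Proof.
apply: entP => X Y; rewrite ent_transfer /ent mxE !(inj_eq (can_inj rankOfK)).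
have -> : (X == X0) && (Y == Y0) =
  [&& X0 :\: Y0 \subset X, [disjoint Y0 :\: X0 & X :\: (X0 :\: Y0)],
      Y == Y0 :\: X0 :|: X :\: (X0 :\: Y0) & X :\: (X0 :\: Y0) == X0 :&: Y0].
  by set_bool.
by rewrite !andbA; case: ifP.
Qed.

Lemma cAB_transfer P Q : cAB P Q = transfer P Q (fun Z => wsign P Z * wsign Q Z).
Proof.
apply: entP => X Y; rewrite ent_mul ent_transfer_sum; apply: eq_bigr => Z _.
rewrite ent_cstarS ent_cannS.
by case: [disjoint P & Z]; case: (X == _); case: [disjoint Q & Z]; case: (Y == _);
  rewrite /= ?mulr0 ?mul0r.
Qed.

Lemma ent_nS T X Y : ent (nS T) X Y = ((X == Y) && (T \subset X))%:R.
Proof.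
rewrite /nS cAB_transfer ent_transfer wsignK.
have -> : [&& T \subset X, [disjoint T & X :\: T] & Y == T :|: X :\: T] =
          (X == Y) && (T \subset X) by set_bool.
by case: (_ && _).
Qed.

Lemma ent_bK K X Y : ent (bK K) X Y = (X == Y)%:R * (-1) ^+ #|K :&: X|.
Proof.
rewrite /bK ent_sum; under eq_bigr do rewrite entZ ent_nS.
have [_|_] := eqVneq X Y; last by rewrite mul0r big1 // => T _; rewrite mulr0.
rewrite mul1r (eq_bigr (fun T => if T \subset X then (-2) ^+ #|T| else 0)); last first.
  by move=> T _; case: (T \subset X); rewrite ?mulr1 ?mulr0.
rewrite -big_mkcondr (eq_bigl (fun T => T \subset K :&: X)) => [|T]; last first.
  by rewrite subsetI.
by rewrite sum_subset_pow; congr (_ ^+ _); ring.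
Qed.

Lemma ent_bK_mul K M X Y : ent (bK K *m M) X Y = (-1) ^+ #|K :&: X| * ent M X Y.
Proof.
rewrite ent_mul (bigD1 X) //= big1 ?addr0 => [|Z nZ].
  by rewrite ent_bK eqxx mul1r.
by rewrite ent_bK eq_sym (negbTE nZ) !mul0r.
Qed.

Lemma ent_nS_mul T M X Y : ent (nS T *m M) X Y = (T \subset X)%:R * ent M X Y.
Proof.
rewrite ent_mul (bigD1 X) //= big1 ?addr0 => [|Z nZ].
  by rewrite ent_nS eqxx.
by rewrite ent_nS eq_sym (negbTE nZ) !mul0r.
Qed.

Lemma cAB_split T P Q : [disjoint T & P] -> [disjoint T & Q] ->
  cAB (T :|: P) (T :|: Q) = (wsign P T * wsign Q T) *: (nS T *m cAB P Q).
Proof.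
move=> dTP dTQ; apply: entP => X Y; rewrite entZ ent_nS_mul !cAB_transfer !ent_transfer.
have -> : [&& T :|: P \subset X, [disjoint T :|: Q & X :\: (T :|: P)]
             & Y == T :|: Q :|: X :\: (T :|: P)] =
          (T \subset X) && [&& P \subset X, [disjoint Q & X :\: P] & Y == Q :|: X :\: P].
  by set_bool.
case: (boolP (T \subset X)) => TX; last by rewrite andFb mul0r mulr0.
rewrite andTb mul1r; case: ifP => _; last by rewrite mulr0.
have eXP : X :\: P = T :|: X :\: (T :|: P).
  by apply/setP => i; move: (subsetP TX i) => /implyP; push_disjoint i; rewrite !inE;
    case_memberships.
have dTX : [disjoint T & X :\: (T :|: P)] by set_bool.
rewrite eXP !wsignUl // !wsignUr //.
set a := wsign P T; set b := wsign Q T; set t := wsign T _.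
set u := wsign P _; set v := wsign Q _.
transitivity (u * v * (t * t)); first by ring.
transitivity (u * v * ((a * a) * (b * b))); last by ring.
by rewrite /t /a /b !wsignK !mulr1.
Qed.

Lemma nS_sum_bK T :
  2 ^+ #|T| *: nS T = \sum_(K : {set 'I_n} | K \subset T) (-1) ^+ #|K| *: bK K.
Proof.
apply: entP => X Y; rewrite entZ ent_nS ent_sum.
under eq_bigr do rewrite entZ ent_bK.
have [_|_] := eqVneq X Y; last by rewrite mulr0 big1 // => K _; rewrite mul0r mulr0.
rewrite (eq_bigr (fun K => (-1) ^+ #|(T :\: X :|: X :\: T) :&: K|)) => [|K sK]; last first.
  by rewrite mul1r -sign_cardI_symdiff (setIC X) (setIidPr sK).
rewrite sum_subset_sign.
have -> : [disjoint T :\: X :|: X :\: T & T] = (T \subset X) by set_bool.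
by case: (T \subset X); rewrite ?mulr1 ?mulr0.
Qed.

Definition bcAB K P Q : op n := bK K *m cAB P Q.

Lemma bcAB_transfer K P Q : [disjoint K & P] ->
  bcAB K P Q = transfer P Q (fun Z => (-1) ^+ #|K :&: Z| * (wsign P Z * wsign Q Z)).
Proof.
move=> dKP; apply: entP => X Y; rewrite ent_bK_mul cAB_transfer !ent_transfer.
case: ifP => _; last by rewrite mulr0.
by have -> : K :&: X = K :&: (X :\: P) by set_eq.
Qed.

Lemma bK_bcAB K : bK K = bcAB K set0 set0.
Proof.
apply: entP => X Y; rewrite ent_bK_mul -[cAB _ _]/(nS set0) ent_nS ent_bK sub0set andbT.
by rewrite mulrC.
Qed.

Lemma adj_bcAB K P Q : [disjoint K & P] -> [disjoint K & Q] ->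
  adj (bcAB K P Q) = bcAB K Q P.
Proof.
move=> dKP dKQ; rewrite !bcAB_transfer // adj_transfer; apply: eq_transfer => Z _ _.
by rewrite !rmorphM /= rmorph_sign !wsign_conj [wsign P Z * _]mulrC.
Qed.

Definition disjoint3 K P Q := [&& [disjoint K & P], [disjoint K & Q] & [disjoint P & Q]].

Lemma disjoint3_swap K P Q : disjoint3 K P Q -> disjoint3 K Q P.
Proof. by case/and3P => dKP dKQ dPQ; rewrite /disjoint3 dKP dKQ disjoint_sym dPQ. Qed.

Lemma disjoint3_set0 K : disjoint3 K set0 set0.
Proof. by rewrite /disjoint3 -!setI_eq0 setI0 set0I eqxx. Qed.

Lemma hs_bcAB K P Q K' P' Q' : disjoint3 K P Q -> disjoint3 K' P' Q' ->
  hs (bcAB K P Q) (bcAB K' P' Q') =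
  ([&& K == K', P == P' & Q == Q'])%:R * 2%:R ^+ #|~: (P :|: Q)|.
Proof.
case/and3P => dKP dKQ dPQ /and3P [dKP' dKQ' dPQ'].
rewrite (bcAB_transfer _ dKP) (bcAB_transfer _ dKP') hs_transfer //.
have [eP|_] := eqVneq P P'; last by rewrite andbF mul0r.
have [eQ|_] := eqVneq Q Q'; last by rewrite !andbF mul0r.
subst P' Q'; rewrite !andbT.
under eq_bigr => Z _ do rewrite rmorphM /= rmorph_sign rmorphM /= !wsign_conj
  mulrACA (mulrACA (wsign P Z)) !wsignK !mulr1 sign_cardI_symdiff.
rewrite (eq_bigl (fun Z => Z \subset ~: (P :|: Q))) => [|Z]; last by set_bool.
rewrite sum_subset_sign.
have -> : [disjoint K :\: K' :|: K' :\: K & ~: (P :|: Q)] = (K == K') by set_bool.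
by case: (K == K'); rewrite ?mul1r ?mul0r.
Qed.

(* Walsh-Hadamard inversion: weighting by the characters [(-1)^|K :&: Z0|] isolates
   the component [Z = Z0] of the transfers. *)
Lemma sum_sign_bcAB P Q Z0 :
  [disjoint P & Z0] -> [disjoint Q & Z0] ->
  \sum_(K : {set 'I_n} | K \subset ~: (P :|: Q)) (-1) ^+ #|K :&: Z0| *: bcAB K P Q =
  (2 ^+ #|~: (P :|: Q)| * (wsign P Z0 * wsign Q Z0)) *:
    transfer P Q (fun Z => (Z == Z0)%:R).
Proof.
move=> dPZ0 dQZ0.
have dKP K : K \subset ~: (P :|: Q) -> [disjoint K & P].
  by set_bool.
under eq_bigr => K /dKP dK do rewrite (bcAB_transfer _ dK) scale_transfer.
rewrite sum_transfer scale_transfer; apply: eq_transfer => Z dPZ dQZ.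
under eq_bigr => K _ do rewrite mulrA (setIC K Z0) (setIC K Z) sign_cardI_symdiff mulrC.
rewrite -mulr_sumr sum_subset_sign.
have -> : [disjoint Z0 :\: Z :|: Z :\: Z0 & ~: (P :|: Q)] = (Z == Z0) by set_bool.
by case: eqVneq => [->|_]; rewrite ?mulr1 ?mulr0 // mulrC.
Qed.

Lemma bcAB_sum_cAB K P Q : [disjoint K & P] -> [disjoint K & Q] ->
  bcAB K P Q = \sum_(T : {set 'I_n} | T \subset K)
                 ((-2) ^+ #|T| * (wsign P T * wsign Q T)) *: cAB (T :|: P) (T :|: Q).
Proof.
move=> dKP dKQ; rewrite /bcAB /bK mulmx_suml; apply: eq_bigr => T sT.
have dTP : [disjoint T & P] by move: sT; set_bool.
have dTQ : [disjoint T & Q] by move: sT; set_bool.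
rewrite (cAB_split dTP dTQ) !scalerA -scalemxAl; congr (_ *: _).
by rewrite -mulrA mulrACA !wsignK !mulr1.
Qed.

Lemma cAB_sum_bcAB A B :
  cAB A B = (2 ^- #|A :&: B| * (wsign (A :\: B) (A :&: B) * wsign (B :\: A) (A :&: B))) *:
    \sum_(K : {set 'I_n} | K \subset A :&: B) (-1) ^+ #|K| *: bcAB K (A :\: B) (B :\: A).
Proof.
set T := A :&: B; set P := A :\: B; set Q := B :\: A.
have dTP : [disjoint T & P] by set_bool.
have dTQ : [disjoint T & Q] by set_bool.
have -> : cAB A B = cAB (T :|: P) (T :|: Q) by congr cAB; set_eq.
rewrite (cAB_split dTP dTQ).
have -> : nS T *m cAB P Q =
          2 ^- #|T| *: \sum_(K : {set 'I_n} | K \subset T) (-1) ^+ #|K| *: bcAB K P Q.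
  rewrite /bcAB; under eq_bigr do rewrite scalemxAl.
  rewrite -mulmx_suml -nS_sum_bK -scalemxAl scalerA mulVf ?scale1r //.
  by rewrite expf_neq0 // pnatr_eq0.
by rewrite scalerA mulrC.
Qed.

(** * The family B^R *)

Lemma sqrt2_powV_conj k : (sqrtC 2 ^- k)^* = sqrtC 2 ^- k :> algC.
Proof. by apply: geC0_conj; rewrite invr_ge0 exprn_ge0 // sqrtC_ge0 ler0n. Qed.

Lemma sqrt2_powV_neq0 k : sqrtC 2 ^- k != 0 :> algC.
Proof. by rewrite invr_eq0 expf_neq0 // sqrtC_eq0 pnatr_eq0. Qed.

Lemma sqrt2_powV_sqr k : sqrtC 2 ^- k * sqrtC 2 ^- k * 2 ^+ k = 1 :> algC.
Proof. by rewrite -invfM -exprMn -expr2 sqrtCK mulVf // expf_neq0 // pnatr_eq0. Qed.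

(* [n + 1 - #|P :|: Q|] is one more than the number of modes outside [P :|: Q]. *)
Definition bscale P Q : algC := sqrtC 2 ^- (n + 1 - #|P :|: Q|).

Lemma bscale_conj P Q : (bscale P Q)^* = bscale P Q.
Proof. exact: sqrt2_powV_conj. Qed.

Lemma bscaleC P Q : bscale Q P = bscale P Q.
Proof. by rewrite /bscale setUC. Qed.

Lemma bscale_sqr P Q : bscale P Q * bscale P Q * (2 * 2 ^+ #|~: (P :|: Q)|) = 1.
Proof.
rewrite /bscale; have -> : (n + 1 - #|P :|: Q| = #|~: (P :|: Q)|.+1)%N.
  by have := cardsC (P :|: Q); rewrite card_ord; lia.
by rewrite -exprS sqrt2_powV_sqr.
Qed.

Definition phase (b : bool) : algC := if b then 1 else - 'i.

Lemma phase_orth b b' :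
  (phase b)^* * phase b' + phase b * (phase b')^* = 2 * (b == b')%:R.
Proof.
have ii : 'i * 'i = -1 :> algC by rewrite -expr2 sqrCi.
case: b; case: b'; rewrite /= ?conjC1 ?rmorphN /= ?conjCi ?opprK; try ring.
by rewrite mulrN mulNr ii; ring.
Qed.

Lemma bfam_inl K : bfam (inl K) = sqrtC 2 ^- n *: bcAB K set0 set0.
Proof. by rewrite -bK_bcAB. Qed.

Lemma bfam_inr K P Q b : bfam (inr (K, P, Q, b)) =
  bscale P Q *: (phase b *: bcAB K P Q + (phase b)^* *: bcAB K Q P).
Proof.
rewrite /bfam /bcAB -/(bscale P Q); case: b => /=.
  by rewrite conjC1 !scale1r mulmxDr.
by rewrite mulmxBr rmorphN /= conjCi scalerBr !scaleNr !opprK.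
Qed.

Lemma bfam_inr_addi K P Q :
  bfam (inr (K, P, Q, true)) + 'i *: bfam (inr (K, P, Q, false)) =
  (2 * bscale P Q) *: bcAB K P Q.
Proof.
apply: entP => X Y; rewrite !bfam_inr /phase conjC1 rmorphN /= conjCi opprK.
rewrite !(entD, entZ); set a := ent (bcAB K P Q) X Y; set b := ent (bcAB K Q P) X Y.
apply/eqP; rewrite -subr_eq0; apply/eqP.
transitivity (bscale P Q * (b - a) * (1 + 'i ^+ 2)); first by ring.
by rewrite sqrCi subrr mulr0.
Qed.

Lemma bfam_inr_subi K P Q :
  bfam (inr (K, P, Q, true)) - 'i *: bfam (inr (K, P, Q, false)) =
  (2 * bscale P Q) *: bcAB K Q P.
Proof.
apply: entP => X Y; rewrite !bfam_inr /phase conjC1 rmorphN /= conjCi opprK.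
rewrite !(entD, entN, entZ); set a := ent (bcAB K P Q) X Y; set b := ent (bcAB K Q P) X Y.
apply/eqP; rewrite -subr_eq0; apply/eqP.
transitivity (bscale P Q * (a - b) * (1 + 'i ^+ 2)); first by ring.
by rewrite sqrCi subrr mulr0.
Qed.

(** * k-body operators *)

Lemma Ok0 k : Ok k (0 : op n).
Proof.
exists 0%N, (fun _ => 0), (fun _ => 0%N), (fun _ => 0%N), (fun _ => 0), (fun _ => 0).
by split; [case | rewrite big_ord0].
Qed.

Lemma OkD k M N : Ok k M -> Ok k N -> Ok k (M + N).
Proof.
move=> [m1 [c1 [r1 [s1 [o1 [e1 [H1 ->]]]]]]] [m2 [c2 [r2 [s2 [o2 [e2 [H2 ->]]]]]]].
pose sp (U : Type) (f1 : 'I_m1 -> U) (f2 : 'I_m2 -> U) (i : 'I_(m1 + m2)) :=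
  match split i with inl j => f1 j | inr j => f2 j end.
exists (m1 + m2)%N, (sp _ c1 c2), (sp _ r1 r2), (sp _ s1 s2), (sp _ o1 o2), (sp _ e1 e2).
split; first by move=> i; rewrite /sp; case: (split i) => j; [exact: H1 | exact: H2].
rewrite big_split_ord /=; congr (_ + _); apply: eq_bigr => j _; rewrite /sp.
  by rewrite (unsplitK (inl j : 'I_m1 + 'I_m2)).
by rewrite (unsplitK (inr j : 'I_m1 + 'I_m2)).
Qed.

Lemma OkZ k c M : Ok k M -> Ok k (c *: M).
Proof.
move=> [m [c1 [r [s [o [e [H ->]]]]]]]; exists m, (fun i => c * c1 i), r, s, o, e.
by split => //; rewrite scaler_sumr; apply: eq_bigr => i _; rewrite scalerA.
Qed.

Lemma Ok_sum k (I : finType) (r : pred I) (F : I -> op n) :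
  (forall i, r i -> Ok k (F i)) -> Ok k (\sum_(i | r i) F i).
Proof. by apply: big_ind => //; [exact: Ok0 | exact: OkD]. Qed.

Lemma homog_phi A : homog #|A| (phi A).
Proof. by move=> B; rewrite phiE; case: (B =P A) => [->|]; rewrite ?eqxx. Qed.

Lemma Ok_cAB k A B l : (#|A| + #|B| = 2 * l)%N -> (l <= k)%N -> Ok k (cAB A B).
Proof.
move=> e lk; exists 1%N, (fun _ => 1), (fun _ => #|A|), (fun _ => #|B|),
  (fun _ => phi A), (fun _ => phi B).
split; last by rewrite big_ord1 scale1r.
by move=> _; split; [exact: homog_phi | exact: homog_phi | exists l].
Qed.

Lemma Ok_bcAB k K P Q l : [disjoint K & P] -> [disjoint K & Q] ->
  (#|P| + #|Q| + 2 * #|K| = 2 * l)%N -> (l <= k)%N -> Ok k (bcAB K P Q).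
Proof.
move=> dKP dKQ e lk; rewrite (bcAB_sum_cAB dKP dKQ); apply: Ok_sum => T sT.
have dTP : [disjoint T & P] by move: sT; set_bool.
have dTQ : [disjoint T & Q] by move: sT; set_bool.
apply/OkZ/(Ok_cAB (l := (l - #|K| + #|T|)%N)); have := subset_leq_card sT;
  rewrite ?cards_disjU //; lia.
Qed.

Lemma cstar_sum (om : fock n) : cstar om = \sum_A om (rankOf A) 0 *: cstarS A.
Proof.
apply: entP => X Y; rewrite ent_sum; under [RHS]eq_bigr do rewrite entZ ent_cstarS.
by rewrite /ent /cstar mxE !rankOfK.
Qed.

Lemma cstar_cann_sum (om et : fock n) : cstar om *m cann et =
  \sum_A \sum_B (om (rankOf A) 0 * (et (rankOf B) 0)^*) *: cAB A B.
Proof.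
rewrite /cann !cstar_sum adj_sum mulmx_suml; apply: eq_bigr => A _.
rewrite -scalemxAl mulmx_sumr scaler_sumr; apply: eq_bigr => B _.
by rewrite adjZ -scalemxAr scalerA.
Qed.

Definition bdegree (x : bidx n) : nat :=
  match x with inl K => 2 * #|K| | inr (K, P, Q, _) => #|P| + #|Q| + 2 * #|K| end.

Lemma bcondP k x : reflect (exists2 l, l <= k & bdegree x = 2 * l)%N (bcond k x).
Proof.
case: x => [K|[[[K P] Q] b]] /=.
  by apply: (iffP idP) => [Kk | [l lk e]]; [exists #|K| | lia].
apply: (iffP existsP) => [[l /eqP e] | [l lk e]].
  by exists l; rewrite // -ltnS.
have lk' : (l < k.+1)%N by rewrite ltnS.
by exists (Ordinal lk'); apply/eqP.
Qed.

Section Family.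
Variable lt : rel {set 'I_n}.
Hypothesis lt_irr : irreflexive lt.
Hypothesis lt_trans : transitive lt.

Lemma lt_neq P Q : lt P Q -> P != Q.
Proof. by apply: contraTneq => ->; rewrite lt_irr. Qed.

Lemma lt_asym P Q : lt P Q -> lt Q P = false.
Proof. by move=> ltPQ; apply/negP => /(lt_trans ltPQ); rewrite lt_irr. Qed.

Lemma bvalid_inr K P Q b : bvalid lt (inr (K, P, Q, b)) = disjoint3 K P Q && lt P Q.
Proof. by rewrite /= /disjoint3 !andbA. Qed.

Lemma adj_bfam x : bvalid lt x -> adj (bfam x) = bfam x.
Proof.
case: x => [K _|[[[K P] Q] b]].
  case/and3P: (disjoint3_set0 K) => dK0 _ _.
  by rewrite bfam_inl adjZ sqrt2_powV_conj (adj_bcAB dK0 dK0).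
rewrite bvalid_inr => /andP [/and3P [dKP dKQ _] _].
rewrite bfam_inr adjZ adjD !adjZ (adj_bcAB dKP dKQ) (adj_bcAB dKQ dKP).
by rewrite bscale_conj conjCK addrC.
Qed.

Lemma hs_bfam_inl K K' : hs (bfam (inl K)) (bfam (inl K')) = (K == K')%:R.
Proof.
rewrite !bfam_inl hsZl hsZr (hs_bcAB (disjoint3_set0 K) (disjoint3_set0 K')).
rewrite sqrt2_powV_conj eqxx !andbT setU0 setC0 cardsT card_ord.
by rewrite (mulrC (_%:R)) !mulrA sqrt2_powV_sqr mul1r.
Qed.

Lemma hs_bfam_inl_inr K K' P Q b : disjoint3 K' P Q -> P != Q ->
  hs (bfam (inl K)) (bfam (inr (K', P, Q, b))) = 0.
Proof.
move=> d nPQ; rewrite bfam_inl bfam_inr hsZl hsZr hsDr !hsZr.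
rewrite (hs_bcAB (disjoint3_set0 K) d) (hs_bcAB (disjoint3_set0 K) (disjoint3_swap d)).
have -> : (set0 == P) && (set0 == Q) = false.
  by apply: contraNF nPQ => /andP [/eqP <- /eqP <-].
have -> : (set0 == Q) && (set0 == P) = false.
  by apply: contraNF nPQ => /andP [/eqP <- /eqP <-].
by rewrite !andbF !mul0r !mulr0 addr0 !mulr0.
Qed.

Lemma hs_bfam_inr K P Q b K' P' Q' b' :
  disjoint3 K P Q -> lt P Q -> disjoint3 K' P' Q' -> lt P' Q' ->
  hs (bfam (inr (K, P, Q, b))) (bfam (inr (K', P', Q', b'))) =
  ([&& K == K', P == P', Q == Q' & b == b'])%:R.
Proof.
move=> d ltPQ d' ltPQ'; have ds := disjoint3_swap d; have ds' := disjoint3_swap d'.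
rewrite !bfam_inr hsZl hsZr !hsDl !hsDr !hsZl !hsZr.
rewrite (hs_bcAB d d') (hs_bcAB d ds') (hs_bcAB ds d') (hs_bcAB ds ds').
have swap : (P == Q') && (Q == P') = false.
  by apply/andP => -[/eqP ePQ' /eqP eQP']; rewrite ePQ' eQP' lt_asym in ltPQ.
rewrite swap [(Q == P') && _]andbC swap !andbF !mul0r !mulr0 addr0 add0r.
have [eK|_] := eqVneq K K'; last by rewrite ?andbF !(mul0r, mulr0, addr0).
have [eP|_] := eqVneq P P'; last by rewrite ?andbF !(mul0r, mulr0, addr0).
have [eQ|_] := eqVneq Q Q'; last by rewrite ?andbF !(mul0r, mulr0, addr0).
subst K' P' Q'; rewrite !andTb bscale_conj conjCK [Q :|: P]setUC.
transitivity (bscale P Q * bscale P Q * 2 ^+ #|~: (P :|: Q)| * (2 * (b == b')%:R)).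
  by rewrite -phase_orth !mul1r; ring.
by rewrite mulrA -(mulrA (bscale P Q * bscale P Q)) (mulrC (2 ^+ _)) bscale_sqr mul1r.
Qed.

Lemma hs_bfam x y : bvalid lt x -> bvalid lt y -> hs (bfam x) (bfam y) = (x == y)%:R.
Proof.
case: x => [K|[[[K P] Q] b]]; case: y => [K'|[[[K' P'] Q'] b']]; rewrite ?bvalid_inr.
- by move=> _ _; rewrite hs_bfam_inl.
- by move=> _ /andP [d /lt_neq nPQ]; rewrite hs_bfam_inl_inr.
- by move=> /andP [d /lt_neq nPQ] _; rewrite -hs_conj hs_bfam_inl_inr ?conjC0.
- move=> /andP [d ltPQ] /andP [d' ltPQ']; rewrite (hs_bfam_inr _ _ d ltPQ d' ltPQ').
  have -> : (inr (K, P, Q, b) == inr (K', P', Q', b') :> bidx n) =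
            ((K, P, Q, b) == (K', P', Q', b')) by [].
  by rewrite !xpair_eqE !andbA.
Qed.

Definition inspan M := exists a : bidx n -> algC, M = \sum_(x | bvalid lt x) a x *: bfam x.

Lemma inspanD M N : inspan M -> inspan N -> inspan (M + N).
Proof.
move=> [a ->] [b ->]; exists (fun x => a x + b x); rewrite -big_split /=.
by apply: eq_bigr => x _; rewrite scalerDl.
Qed.

Lemma inspanZ c M : inspan M -> inspan (c *: M).
Proof.
move=> [a ->]; exists (fun x => c * a x); rewrite scaler_sumr.
by apply: eq_bigr => x _; rewrite scalerA.
Qed.

Lemma inspan_sum (I : finType) (r : pred I) (F : I -> op n) :
  (forall i, r i -> inspan (F i)) -> inspan (\sum_(i | r i) F i).
Proof.
apply: big_ind => //; last exact: inspanD.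
by exists (fun _ => 0); rewrite big1 // => x _; rewrite scale0r.
Qed.

Lemma inspan_bfam x : bvalid lt x -> inspan (bfam x).
Proof.
move=> vx; exists (fun y => (y == x)%:R).
rewrite (bigD1 x) //= eqxx scale1r big1 ?addr0 // => y /andP [_ /negbTE ->].
by rewrite scale0r.
Qed.

Lemma inspanZK c M : c != 0 -> inspan (c *: M) -> inspan M.
Proof. by move=> c0 /(inspanZ c^-1); rewrite scalerA mulVf // scale1r. Qed.

Hypothesis lt_total : forall A B, A != B -> lt A B || lt B A.

Lemma inspan_bcAB K P Q : disjoint3 K P Q -> inspan (bcAB K P Q).
Proof.
move=> d; have [ePQ|nPQ] := eqVneq P Q.
  have P0 : P = set0 by case/and3P: d => _ _; rewrite -setI_eq0 ePQ setIid => /eqP.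
  subst Q; rewrite P0; apply: (inspanZK (sqrt2_powV_neq0 n)).
  by rewrite -bfam_inl; apply: inspan_bfam.
have c2 : 2 * bscale P Q != 0 by rewrite mulf_neq0 ?pnatr_eq0 ?sqrt2_powV_neq0.
apply: (inspanZK c2); case/orP: (lt_total nPQ) => [ltPQ|ltQP].
  rewrite -bfam_inr_addi; apply: inspanD; last apply: inspanZ;
    by apply: inspan_bfam; rewrite bvalid_inr d ltPQ.
rewrite -bscaleC -bfam_inr_subi -scaleNr; apply: inspanD; last apply: inspanZ;
  by apply: inspan_bfam; rewrite bvalid_inr (disjoint3_swap d) ltQP.
Qed.

Lemma inspan_delta X0 Y0 : inspan (delta_mx (rankOf X0) (rankOf Y0)).
Proof.
set P := X0 :\: Y0; set Q := Y0 :\: X0; set Z0 := X0 :&: Y0.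
have dPZ0 : [disjoint P & Z0] by set_bool.
have dQZ0 : [disjoint Q & Z0] by set_bool.
have c0 : 2 ^+ #|~: (P :|: Q)| * (wsign P Z0 * wsign Q Z0) != 0 :> algC.
  by rewrite /wsign !mulf_neq0 ?expf_neq0 ?pnatr_eq0 ?oppr_eq0 ?oner_eq0.
apply: (inspanZK c0); rewrite delta_transfer -sum_sign_bcAB //.
apply: inspan_sum => K sK; apply/inspanZ/inspan_bcAB.
by move: sK; rewrite /disjoint3 /P /Q; set_bool.
Qed.

Lemma inspan_all M : inspan M.
Proof.
rewrite (matrix_sum_delta M); apply: inspan_sum => i _; apply: inspan_sum => j _.
by apply: inspanZ; rewrite -(setOfK i) -(setOfK j); apply: inspan_delta.
Qed.

Lemma bfam_expand M : M = \sum_(x | bvalid lt x) hs (bfam x) M *: bfam x.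
Proof.
have [a eM] := inspan_all M.
have coord y : bvalid lt y -> hs (bfam y) M = a y.
  move=> vy; rewrite eM hs_sumr (bigD1 y) //= hsZr (hs_bfam vy vy) eqxx mulr1.
  rewrite big1 ?addr0 // => z /andP [vz nzy].
  by rewrite hsZr (hs_bfam vy vz) eq_sym (negbTE nzy) mulr0.
by rewrite {1}eM; apply: eq_bigr => y vy; rewrite coord.
Qed.

Lemma hs_bfam_bcAB_eq0 x K P Q : bvalid lt x -> disjoint3 K P Q ->
  bdegree x != (#|P| + #|Q| + 2 * #|K|)%N -> hs (bfam x) (bcAB K P Q) = 0.
Proof.
case: x => [K' _|[[[K' P'] Q'] b]]; last rewrite bvalid_inr => /andP [d' _]; move=> d ndeg.
  rewrite bfam_inl hsZl (hs_bcAB (disjoint3_set0 K') d).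
  suff -> : [&& K' == K, set0 == P & set0 == Q] = false by rewrite mul0r mulr0.
  by apply: contraNF ndeg => /and3P [/eqP -> /eqP <- /eqP <-]; rewrite /= !cards0.
rewrite bfam_inr hsZl hsDl !hsZl (hs_bcAB d' d) (hs_bcAB (disjoint3_swap d') d).
have -> : [&& K' == K, P' == P & Q' == Q] = false.
  by apply: contraNF ndeg => /and3P [/eqP -> /eqP <- /eqP <-].
have -> : [&& K' == K, Q' == P & P' == Q] = false.
  apply: contraNF ndeg => /and3P [/eqP -> /eqP <- /eqP <-].
  by rewrite /= [(#|Q'| + _)%N]addnC.
by rewrite !mul0r !mulr0 addr0 mulr0.
Qed.

Lemma hs_bfam_cAB_eq0 k x A B l : bvalid lt x -> ~~ bcond k x ->
  (#|A| + #|B| = 2 * l)%N -> (l <= k)%N -> hs (bfam x) (cAB A B) = 0.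
Proof.
move=> vx nb e lk; rewrite cAB_sum_bcAB hsZr hs_sumr big1 ?mulr0 // => K sK.
rewrite hsZr hs_bfam_bcAB_eq0 ?mulr0 //; first by move: sK; rewrite /disjoint3; set_bool.
apply: contra nb => /eqP ex; apply/bcondP; rewrite ex.
have cardA := cardsID B A; have cardB := cardsID A B; rewrite setIC in cardB.
have cardK := subset_leq_card sK.
by exists (l - #|A :&: B| + #|K|)%N; lia.
Qed.

Lemma hs_bfam_Ok_eq0 k x M : bvalid lt x -> ~~ bcond k x -> Ok k M -> hs (bfam x) M = 0.
Proof.
move=> vx nb [m [c [r [s [om [et [H ->]]]]]]].
rewrite hs_sumr big1 // => i _; rewrite hsZr cstar_cann_sum hs_sumr big1 ?mulr0 // => A _.
rewrite hs_sumr big1 // => B _; rewrite hsZr.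
case: (H i) => homA homB [l [lk e]].
have [eA|nA] := eqVneq #|A| (r i); last by rewrite homA // !mul0r.
have [eB|nB] := eqVneq #|B| (s i); last by rewrite (homB B nB) conjC0 mulr0 mul0r.
by rewrite (hs_bfam_cAB_eq0 vx nb (l := l)) ?mulr0 // eA eB.
Qed.

Lemma Ok_bfam k x : bvalid lt x -> bcond k x -> Ok k (bfam x).
Proof.
case: x => [K _|[[[K P] Q] b]]; last rewrite bvalid_inr => /andP [/and3P [dKP dKQ _] _];
  case/bcondP => l lk e.
  case/and3P: (disjoint3_set0 K) => dK0 _ _.
  by rewrite bfam_inl; apply/OkZ/(Ok_bcAB (l := l)); rewrite ?cards0.
rewrite bfam_inr; apply/OkZ/OkD; apply/OkZ/(Ok_bcAB (l := l)) => //.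
by rewrite [(#|Q| + _)%N]addnC.
Qed.

Lemma Oksa_bfam k x : bvalid lt x -> Oksa k (bfam x) <-> bcond k x.
Proof.
move=> vx; split => [[OkX _]|bx]; last by split; [exact: Ok_bfam | exact: adj_bfam].
apply/negPn/negP => nb; have := hs_bfam_Ok_eq0 vx nb OkX.
by rewrite (hs_bfam vx vx) eqxx => /eqP; rewrite oner_eq0.
Qed.

Lemma Oksa_real_span k (X : op n) : Oksa k X -> exists a : bidx n -> algC,
  (forall x, a x \is Num.real) /\ X = \sum_(x | bvalid lt x && bcond k x) a x *: bfam x.
Proof.
move=> [OkX saX]; exists (fun x => if bvalid lt x then hs (bfam x) X else 0); split.
  by move=> x; case: ifP => [vx|_]; [exact: hs_real (adj_bfam vx) saX | exact: rpred0].
rewrite {1}(bfam_expand X) (bigID (bcond k)) /=.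
rewrite [X in _ + X]big1 ?addr0 => [|x /andP [vx nb]].
  by apply: eq_bigr => x /andP [-> _].
by rewrite (hs_bfam_Ok_eq0 vx nb OkX) scale0r.
Qed.

End Family.

End Fock.

Theorem theorem4p6 (n : nat) (lt : rel {set 'I_n})
  (lt_irr : irreflexive lt) (lt_trans : transitive lt)
  (lt_total : forall A B, A != B -> lt A B || lt B A) :
  (forall x : bidx n, bvalid lt x -> adj (bfam x) = bfam x) /\
  (forall x y : bidx n, bvalid lt x -> bvalid lt y ->
     hs (bfam x) (bfam y) = (x == y)%:R) /\
  (forall X : op n, exists a : bidx n -> algC,
     X = \sum_(x | bvalid lt x) a x *: bfam x) /\
  (forall k : nat,
    (forall x : bidx n, bvalid lt x -> (Oksa k (bfam x) <-> bcond k x)) /\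
    (forall X : op n, Oksa k X -> exists a : bidx n -> algC,
       (forall x, a x \is Num.real) /\
       X = \sum_(x | bvalid lt x && bcond k x) a x *: bfam x)).
Proof.
split; first by move=> x; apply: adj_bfam.
split; first by move=> x y; apply: hs_bfam.
split; first by move=> X; apply: inspan_all.
move=> k; split; first by move=> x; apply: Oksa_bfam.
by move=> X; apply: Oksa_real_span.
Qed.
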